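(* Let $A_1,A_2\subseteq A$ be nonempty and disjoint, $q\in Atom$, $\eta\in\{\mu,\nu\}$ and $\eta q.\varphi\in\mathcal L^\mu_{CC}$. If $M,s\succeq^{q}_{(A_1,A_2)}N,t$ and $N,t\models\eta q.\varphi$, then $M,s\models\exists_{(A_1,A_2)}\eta q.\varphi$.
   Context: Fix a finite set $A$ of actions and a countably infinite set $Atom$ of propositional letters. A model is $M=\langle S^M,R^M,V^M\rangle$ with $S^M\neq\emptyset$ a set of states, $R^M_b\subseteq S^M\times S^M$ for each $b\in A$, and $V^M:Atom\to 2^{S^M}$. A pointed model is $(M,s)$ with $s\in S^M$. Refinements: given $P\subseteq Atom$ and disjoint $A_1,A_2\subseteq A$, a relation $\mathcal Z\subseteq S^M\times S^{M'}$ is a $P$-restricted $(A_1,A_2)$-refinement between $M$ and $M'$ if for every pair $u\mathcal Z u'$: (atoms) $u\in V^M(r)$ iff $u'\in V^{M'}(r)$ for all $r\in Atom\setminus P$; (forth) for every $a\in A\setminus A_2$ and every $v$ with $uR^M_a v$ there is $v'$ with $u'R^{M'}_a v'$ and $v\mathcal Z v'$; (back) for every $a\in A\setminus A_1$ and every $v'$ with $u'R^{M'}_a v'$ there is $v$ with $uR^M_a v$ and $v\mathcal Z v'$. Write $M,u\succeq^P_{(A_1,A_2)}M',u'$ if such a $\mathcal Z$ exists with $u\mathcal Z u'$; the superscript is omitted when $P=\emptyset$, and $\{q\}$ is written $q$. Language $\mathcal L^\mu_{CC}$: $\varphi::= r\mid\neg\varphi\mid\varphi\wedge\varphi\mid\Box_b\varphi\mid\exists_{(A_1,A_2)}\varphi\mid\mu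 q.\varphi$, where $r,q\in Atom$, $b\in A$, $A_1,A_2\subseteq A$ are nonempty and disjoint, and in $\mu q.\varphi$ the letter $q$ occurs only positively (under an even number of negations) in $\varphi$. Abbreviation: $\nu q.\varphi=\neg\mu q.\neg\varphi[\neg q/q]$. Semantics: $M,u\models r$ iff $u\in V^M(r)$; Boolean clauses as usual; $M,u\models\Box_b\varphi$ iff $M,v\models\varphi$ for all $v$ with $uR^M_bv$; $M,u\models\exists_{(A_1,A_2)}\varphi$ iff there is a pointed model $(N,v)$ with $M,u\succeq_{(A_1,A_2)}N,v$ and $N,v\models\varphi$; $M,u\models\mu q.\varphi$ iff $u\in\bigcap\{T\subseteq S^M:\|\varphi\|^{M[q\mapsto T]}\subseteq T\}$, where $\|\varphi\|^M=\{s:M,s\models\varphi\}$ and $M[q\mapsto T]$ is $M$ with $V(q)$ replaced by $T$. *)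

From mathcomp Require Import all_boot all_order.
Unset Implicit Arguments.

Section Logic.
Variable Act : finType.

Record model := Model {
  St : Type;
  St_inh : inhabited St;
  Rel : Act -> St -> St -> Prop;
  Val : nat -> St -> Prop }.




Definition is_refinement (P : nat -> Prop) (A1 A2 : {set Act})
  (M M' : model) (Z : St M -> St M' -> Prop) : Prop :=
  forall u u', Z u u' ->
    (forall r, ~ P r -> (Val M r u <-> Val M' r u')) /\
    (forall a, a \notin A2 -> forall v, Rel M a u v ->
        exists v', Rel M' a u' v' /\ Z v v') /\
    (forall a, a \notin A1 -> forall v', Rel M' a u' v' ->
        exists v, Rel M a u v /\ Z v v').

Definition refines (P : nat -> Prop) (A1 A2 : {set Act})
  (M : model) (u : St M) (M' : model) (u' : St M') : Prop :=
  exists Z, is_refinement P A1 A2 M M' Z /\ Z u u'.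

Inductive form : Type :=
| FVar : nat -> form
| FNeg : form -> form
| FAnd : form -> form -> form
| FBox : Act -> form -> form
| FEx  : {set Act} -> {set Act} -> form -> form
| FMu  : nat -> form -> form.

(* all free occurrences of q in phi have polarity [pol] (true = positive) *)
Fixpoint occ_pol (q : nat) (pol : bool) (phi : form) : Prop :=
  match phi with
  | FVar r => r = q -> pol = true
  | FNeg p => occ_pol q (~~ pol) p
  | FAnd p1 p2 => occ_pol q pol p1 /\ occ_pol q pol p2
  | FBox _ p => occ_pol q pol p
  | FEx _ _ p => occ_pol q pol p
  | FMu r p => if r == q then True else occ_pol q pol p
  end.

Definition positive_in (q : nat) (phi : form) : Prop := occ_pol q true phi.

Fixpoint wf (phi : form) : Prop :=
  match phi with
  | FVar _ => True
  | FNeg p => wf p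
  | FAnd p1 p2 => wf p1 /\ wf p2
  | FBox _ p => wf p
  | FEx A1 A2 p => A1 != set0 /\ A2 != set0 /\ [disjoint A1 & A2] /\ wf p
  | FMu q p => positive_in q p /\ wf p
  end.

(* phi[psi/q] for free occurrences of q (psi will only contain q free) *)
Fixpoint subst (q : nat) (psi : form) (phi : form) : form :=
  match phi with
  | FVar r => if r == q then psi else FVar r
  | FNeg p => FNeg (subst q psi p)
  | FAnd p1 p2 => FAnd (subst q psi p1) (subst q psi p2)
  | FBox b p => FBox b (subst q psi p)
  | FEx A1 A2 p => FEx A1 A2 (subst q psi p)
  | FMu r p => if r == q then FMu r p else FMu r (subst q psi p)
  end.

Definition FNu (q : nat) (phi : form) : form :=
  FNeg (FMu q (FNeg (subst q (FNeg (FVar q)) phi))).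

Definition FFix (eta : bool) (q : nat) (phi : form) : form :=
  if eta then FMu q phi else FNu q phi.

Definition update (M : model) (q : nat) (T : St M -> Prop) : model :=
  @Model (St M) (St_inh M) (Rel M) (fun r => if r == q then T else Val M r).

Fixpoint sat (phi : form) : forall M : model, St M -> Prop :=
  match phi with
  | FVar r => fun M u => Val M r u
  | FNeg p => fun M u => ~ sat p M u
  | FAnd p1 p2 => fun M u => sat p1 M u /\ sat p2 M u
  | FBox b p => fun M u => forall v, Rel M b u v -> sat p M v
  | FEx A1 A2 p => fun M u =>
      exists (N : model) (v : St N), refines (fun _ => False) A1 A2 M u N v /\ sat p N v
  | FMu q p => fun M u =>
      forall T : St M -> Prop,
        (forall w, sat p (update M q T) w -> T w) -> T u
  end.

End Logic.

Arguments St {Act}.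
Arguments FVar {Act}. Arguments FNeg {Act}. Arguments FAnd {Act}.
Arguments FBox {Act}. Arguments FEx {Act}. Arguments FMu {Act}.
Arguments FNu {Act}. Arguments FFix {Act}. Arguments wf {Act}.
Arguments sat {Act}. Arguments refines {Act}. Arguments positive_in {Act}.
Arguments subst {Act}. Arguments update {Act}.

From mathcomp Require Import all_boot all_order.

(* Glue M onto N along the refinement Z: the states are the Z-related pairs
   (x, k), carrying the valuation of M, together with detached copies of the
   states of N.  Then M, s refines the glued model at (s, t) without changing
   any atom, and projecting to the N-component is a bounded morphism that
   respects every atom except q.  Along a bounded morphism, truth of a formula
   is reflected as long as the atoms occurring positively are reflected and
   those occurring negatively are preserved; as q is bound in eta q.phi, the
   formula holds at (s, t).  The same gluing handles the existential case of
   this transfer lemma. *)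

#[local] Arguments Rel {Act}.
#[local] Arguments Val {Act}.
#[local] Arguments occ_pol {Act}.

Section Transfer.
Context {Act : finType}.
Implicit Types (M N X K : model Act) (p phi : form Act) (q : nat).

Definition bounded_morphism {M N} (f : St M -> St N) : Prop :=
  (forall a x y, Rel M a x y -> Rel N a (f x) (f y)) /\
  (forall a x v, Rel N a (f x) v -> exists2 y, Rel M a x y & f y = v).

Definition reflects_atoms {M N} (f : St M -> St N) (c : nat -> Prop) : Prop :=
  forall r x, c r -> Val N r (f x) -> Val M r x.

Definition preserves_atoms {M N} (f : St M -> St N) (c : nat -> Prop) : Prop :=
  forall r x, c r -> Val M r x -> Val N r (f x).

Section UpdateAtoms.
Variables (M N : model Act) (f : St M -> St N) (q : nat).
Variables (T : St M -> Prop) (T' : St N -> Prop) (c : nat -> Prop).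

Lemma reflects_atoms_update : reflects_atoms f c -> (forall x, T' (f x) -> T x) ->
  @reflects_atoms (update M q T) (update N q T') f (fun r => r = q \/ c r).
Proof. by move=> hc hT r x /=; case: eqP => [_ _ | _ [//| /hc]]; [apply: hT | apply]. Qed.

Lemma preserves_atoms_update : preserves_atoms f c -> (forall x, T x -> T' (f x)) ->
  @preserves_atoms (update M q T) (update N q T') f (fun r => r = q \/ c r).
Proof. by move=> hc hT r x /=; case: eqP => [_ _ | _ [//| /hc]]; [apply: hT | apply]. Qed.

Lemma preserves_atoms_update_other : preserves_atoms f c ->
  @preserves_atoms (update M q T) (update N q T') f (fun r => r <> q /\ c r).
Proof. by move=> hc r x /= [nrq cr]; case: eqP => // _; exact: hc. Qed.

End UpdateAtoms.

Arguments reflects_atoms_update {M N f} q {T T' c}.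
Arguments preserves_atoms_update {M N f} q {T T' c}.
Arguments preserves_atoms_update_other {M N f} q T T' {c}.

(* [occ_pol r false phi]: r has no free positive occurrence in phi. *)
Definition polarity_within phi (pos neg : nat -> Prop) : Prop :=
  forall r, (occ_pol r false phi \/ pos r) /\ (occ_pol r true phi \/ neg r).

Lemma polarity_withinW phi (pos neg pos' neg' : nat -> Prop) :
  (forall r, pos r -> pos' r) -> (forall r, neg r -> neg' r) ->
  polarity_within phi pos neg -> polarity_within phi pos' neg'.
Proof. by move=> hpos hneg h r; have [[?|/hpos ?] [?|/hneg ?]] := h r; tauto. Qed.

Lemma polarity_within_neg p pos neg :
  polarity_within (FNeg p) pos neg -> polarity_within p neg pos.
Proof. by move=> h r; have [] := h r. Qed.

Lemma polarity_within_and p1 p2 pos neg :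
  polarity_within (FAnd p1 p2) pos neg ->
  polarity_within p1 pos neg /\ polarity_within p2 pos neg.
Proof. by move=> h; split=> r; have /= := h r; tauto. Qed.

Lemma polarity_within_mu {q p pos neg} : positive_in q p ->
  polarity_within (FMu q p) pos neg ->
  polarity_within p (fun r => r = q \/ pos r) (fun r => r <> q /\ neg r).
Proof.
move=> hq h r; have [-> | /eqP nrq] := eqVneq r q; first by split; [right; left | left].
have /= := h r; rewrite eq_sym; case: eqP => // _; tauto.
Qed.

Lemma polarity_within_fix (eta : bool) q phi :
  polarity_within (FFix eta q phi) (fun r => r <> q) (fun r => r <> q).
Proof.
move=> r; have [-> | /eqP nrq] := eqVneq r q; last by split; right.
by case: eta => /=; rewrite eqxx; split; left.
Qed.

Lemma is_refinementW {P P' : nat -> Prop} {A1 A2 M N Z} :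
  (forall r, P r -> P' r) -> is_refinement Act P A1 A2 M N Z ->
  is_refinement Act P' A1 A2 M N Z.
Proof.
move=> hP hZ u u' /hZ [hval hrel]; split=> // r hr.
by apply: hval => /hP.
Qed.

Section MorphismRefinement.
Variables (M N K : model Act) (f : St M -> St N).
Variables (P : nat -> Prop) (A1 A2 : {set Act}).
Hypothesis hf : bounded_morphism f.

Lemma is_refinement_precomp Z : is_refinement Act P A1 A2 N K Z ->
  is_refinement Act (fun _ => True) A1 A2 M K (fun u => Z (f u)).
Proof.
move=> hZ u k /hZ [_ [forth back]]; split=> //; split.
- by move=> a ha v /hf.1 /(forth a ha).
- move=> a ha v /(back a ha) [w [/hf.2 [y hy <-] Zw]].
  by exists y.
Qed.

Lemma is_refinement_image Z : is_refinement Act P A1 A2 M K Z ->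
  is_refinement Act (fun _ => True) A1 A2 N K
    (fun n k => exists2 u, f u = n & Z u k).
Proof.
move=> hZ _ k [u <- /hZ [_ [forth back]]]; split=> //; split.
- move=> a ha _ /hf.2 [y /(forth a ha) [v' [hv' Zv']] <-].
  by exists v'; split => //; exists y.
- move=> a ha v' /(back a ha) [y [hy Zy]].
  by exists (f y); split; [exact: hf.1 | exists y].
Qed.

End MorphismRefinement.

Arguments is_refinement_precomp {M N K f P A1 A2} hf {Z}.
Arguments is_refinement_image {M N K f P A1 A2} hf {Z}.

Section Amalgam.
Variables (A1 A2 : {set Act}) (X K : model Act) (W : St X -> St K -> Prop).

Inductive amalgam_state : Type :=
| Linked (x : St X) (k : St K) of W x k
| Detached of St K.

Arguments Linked {x k}.

Definition amalgam_point (p : amalgam_state) : St K :=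
  match p with Linked _ k _ => k | Detached k => k end.

(* A detached state may only be entered by an A1-step: these are the edges
   that the refinement is allowed to add. *)
Definition amalgam_rel (a : Act) (p p' : amalgam_state) : Prop :=
  Rel K a (amalgam_point p) (amalgam_point p') /\
  match p, p' with
  | Linked x _ _, Linked x' _ _ => Rel X a x x'
  | Linked _ _ _, Detached _ => a \in A1
  | Detached _, Detached _ => True
  | Detached _, Linked _ _ _ => False
  end.

Definition amalgam_val (r : nat) (p : amalgam_state) : Prop :=
  match p with Linked x _ _ => Val X r x | Detached k => Val K r k end.

Definition amalgam : model Act :=
  @Model Act amalgam_state
    (let: inhabits k := St_inh Act K in inhabits (Detached k))
    amalgam_rel amalgam_val.

Hypothesis hW : is_refinement Act (fun _ => True) A1 A2 X K W.

Lemma amalgam_refines x k (Wxk : W x k) :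
  refines (fun _ => False) A1 A2 X x amalgam (Linked Wxk).
Proof.
exists (fun u (p : amalgam_state) => if p is Linked u' _ _ then u' = u else False).
split=> //; move=> u [u' k' Wu' <- | //]; split=> //.
have [_ [forth back]] := hW _ _ Wu'; split.
- move=> a ha v huv; have [k'' [hk Wv]] := forth a ha v huv.
  by exists (Linked Wv).
- move=> a ha [v k'' Wv | v] [_ hrel] /=; first by exists v.
  by rewrite hrel in ha.
Qed.

Lemma amalgam_point_morphism : bounded_morphism (amalgam_point : St amalgam -> St K).
Proof.
split=> [a p p' [] // | a [x k Wxk | k] v /= hk].
- have [_ [_ back]] := hW _ _ Wxk.
  have [hA1 | nA1] := boolP (a \in A1); first by exists (Detached v).
  have [y [hy Wy]] := back a nA1 v hk.
  by exists (Linked Wy).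
- by exists (Detached v).
Qed.

Lemma amalgam_point_reflects (c : nat -> Prop) :
  (forall x k r, W x k -> c r -> Val K r k -> Val X r x) ->
  reflects_atoms (amalgam_point : St amalgam -> St K) c.
Proof. by move=> h r [x k Wxk | k] hc /= hk; [exact: h hk | ]. Qed.

Lemma amalgam_point_preserves (c : nat -> Prop) :
  (forall x k r, W x k -> c r -> Val X r x -> Val K r k) ->
  preserves_atoms (amalgam_point : St amalgam -> St K) c.
Proof. by move=> h r [x k Wxk | k] hc /= hx; [exact: h hx | ]. Qed.

End Amalgam.

Arguments Linked {X K W x k}.
Arguments amalgam_point {X K W}.
Arguments amalgam_refines {A1 A2 X K W} hW {x k}.
Arguments amalgam_point_morphism {A1 A2 X K W}.
Arguments amalgam_point_reflects {A1 X K W}.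
Arguments amalgam_point_preserves {A1 X K W}.

Definition transfers phi : Prop :=
  forall M N (f : St M -> St N) (a b : nat -> Prop),
  bounded_morphism f -> reflects_atoms f a -> preserves_atoms f b ->
  (polarity_within phi a b -> forall x, sat phi N (f x) -> sat phi M x) /\
  (polarity_within phi b a -> forall x, sat phi M x -> sat phi N (f x)).

Lemma transfers_var r : transfers (FVar r).
Proof.
move=> M N f a b _ ha hb; split=> h x; have [[pos | ar] [neg | br]] := h r.
all: by [have := pos erefl | have := neg erefl | exact: ha | exact: hb].
Qed.

Lemma transfers_neg p : transfers p -> transfers (FNeg p).
Proof.
move=> Tp M N f a b hf ha hb; have [Tr Tp'] := Tp M N f a b hf ha hb.
by split=> /polarity_within_neg h x /= hn hs; apply: hn; [apply: Tp' | apply: Tr].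
Qed.

Lemma transfers_and p1 p2 : transfers p1 -> transfers p2 -> transfers (FAnd p1 p2).
Proof.
move=> T1 T2 M N f a b hf ha hb.
have [T1r T1p] := T1 M N f a b hf ha hb; have [T2r T2p] := T2 M N f a b hf ha hb.
by split=> /polarity_within_and [h1 h2] x /= [s1 s2]; split; auto.
Qed.

Lemma transfers_box c p : transfers p -> transfers (FBox c p).
Proof.
move=> Tp M N f a b hf ha hb; have [Tr Tp'] := Tp M N f a b hf ha hb.
split=> h x /= hs v.
- by move=> /hf.1 /hs; apply: Tr.
- by move=> /hf.2 [y /hs hy <-]; apply: Tp'.
Qed.

Section ExistsTransfer.
Variables (B1 B2 : {set Act}) (p : form Act) (M N : model Act) (f : St M -> St N).
Hypotheses (Tp : transfers p) (hf : bounded_morphism f).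

(* The refinement of N, f x is pulled back along f and glued onto M. *)
Lemma ex_reflect (a b : nat -> Prop) :
  reflects_atoms f a -> preserves_atoms f b -> polarity_within p a b ->
  forall x, sat (FEx B1 B2 p) N (f x) -> sat (FEx B1 B2 p) M x.
Proof.
move=> ha hb hpol x [K [k [[Z [hZ Zk]] hk]]].
pose W u := Z (f u).
have hW : is_refinement Act (fun _ => True) B1 B2 M K W := is_refinement_precomp hf hZ.
have Wk : W x k := Zk.
pose y : St (amalgam B1 M K W) := Linked Wk.
exists _, y; split; first exact (amalgam_refines hW Wk).
refine ((Tp _ _ _ a b (amalgam_point_morphism hW) _ _).1 hpol y hk).
- apply: amalgam_point_reflects => u k' r /hZ [hval _] ar /(hval r id).
  exact: ha.
- apply: amalgam_point_preserves => u k' r /hZ [hval _] br.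
  by move=> /(hb r u br) /(hval r id).
Qed.

Lemma ex_preserve (a b : nat -> Prop) :
  reflects_atoms f a -> preserves_atoms f b -> polarity_within p b a ->
  forall x, sat (FEx B1 B2 p) M x -> sat (FEx B1 B2 p) N (f x).
Proof.
move=> ha hb hpol x [K [k [[Z [hZ Zk]] hk]]].
pose W n k := exists2 u, f u = n & Z u k.
have hW : is_refinement Act (fun _ => True) B1 B2 N K W := is_refinement_image hf hZ.
have Wk : W (f x) k by exists x.
pose y : St (amalgam B1 N K W) := Linked Wk.
exists _, y; split; first exact (amalgam_refines hW Wk).
refine ((Tp _ _ _ b a (amalgam_point_morphism hW) _ _).1 hpol y hk).
- apply: amalgam_point_reflects => _ k' r [u <- /hZ [hval _]] br /(hval r id).
  exact: hb.
- apply: amalgam_point_preserves => _ k' r [u <- /hZ [hval _]] ar.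
  by move=> /(ha r u ar) /(hval r id).
Qed.

End ExistsTransfer.

Arguments ex_reflect B1 B2 {p M N f} Tp hf {a b}.
Arguments ex_preserve B1 B2 {p M N f} Tp hf {a b}.

Lemma transfers_ex B1 B2 p : transfers p -> transfers (FEx B1 B2 p).
Proof.
move=> Tp M N f a b hf ha hb.
by split; [exact (ex_reflect B1 B2 Tp hf ha hb) | exact (ex_preserve B1 B2 Tp hf ha hb)].
Qed.

Section MuTransfer.
Variables (q : nat) (p : form Act) (M N : model Act) (f : St M -> St N).
Hypotheses (hq : positive_in q p) (Tp : transfers p) (hf : bounded_morphism f).

(* A prefixed point T of M yields the prefixed point of N consisting of the
   states all of whose f-preimages lie in T. *)
Lemma mu_reflect (a b : nat -> Prop) :
  reflects_atoms f a -> preserves_atoms f b -> polarity_within (FMu q p) a b ->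
  forall x, sat (FMu q p) N (f x) -> sat (FMu q p) M x.
Proof.
move=> ha hb hpol x hx T hT.
pose T' y := forall x, f x = y -> T x.
apply: (hx T' _ x erefl) => w hw x' Ex'; apply: hT.
have hr := reflects_atoms_update q ha (fun x (h : T' (f x)) => h x erefl).
have hp := preserves_atoms_update_other q T T' hb.
apply: ((Tp (update M q T) (update N q T') f _ _ hf hr hp).1
  (polarity_within_mu hq hpol) x').
by rewrite Ex'.
Qed.

Lemma mu_preserve (a b : nat -> Prop) :
  reflects_atoms f a -> preserves_atoms f b -> polarity_within (FMu q p) b a ->
  forall x, sat (FMu q p) M x -> sat (FMu q p) N (f x).
Proof.
move=> ha hb hpol x hx T hT.
apply: (hx (T \o f)) => w hw; apply: hT.
have hr := reflects_atoms_update q ha (fun x (h : T (f x)) => h).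
have hp := preserves_atoms_update q hb (fun x (h : T (f x)) => h).
apply: ((Tp (update M q (T \o f)) (update N q T) f _ _ hf hr hp).2 _ w hw).
by apply: polarity_withinW (polarity_within_mu hq hpol) => // r [_ ar]; right.
Qed.

End MuTransfer.

Lemma transfers_mu q p : positive_in q p -> transfers p -> transfers (FMu q p).
Proof.
move=> hq Tp M N f a b hf ha hb.
by split; [exact: mu_reflect | exact: mu_preserve].
Qed.

Lemma sat_transfer {phi} : wf phi -> transfers phi.
Proof.
elim: phi => [r | p IH | p1 IH1 p2 IH2 | c p IH | B1 B2 p IH | q p IH] /=.
- by move=> _; exact: transfers_var.
- by move=> /IH; exact: transfers_neg.
- by move=> [/IH1 T1 /IH2 T2]; exact: transfers_and.
- by move=> /IH; exact: transfers_box.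
- by move=> [_ [_ [_ /IH]]]; exact: transfers_ex.
- by move=> [hq /IH]; exact: transfers_mu.
Qed.

Lemma refinement_transfer {P : nat -> Prop} {A1 A2 phi M N s t} : wf phi ->
  refines P A1 A2 M s N t ->
  polarity_within phi (fun r => ~ P r) (fun r => ~ P r) ->
  sat phi N t -> sat (FEx A1 A2 phi) M s.
Proof.
move=> hwf [Z [hZ Zst]] hpol hsat.
have hW : is_refinement Act (fun _ => True) A1 A2 M N Z :=
  is_refinementW (fun _ _ => I) hZ.
pose y : St (amalgam A1 M N Z) := Linked Zst.
exists _, y; split; first exact (amalgam_refines hW Zst).
have hr : @reflects_atoms (amalgam A1 M N Z) N amalgam_point (fun r => ~ P r).
  by apply: amalgam_point_reflects => u k r /hZ [hval _] nP /(hval r nP).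
have hp : @preserves_atoms (amalgam A1 M N Z) N amalgam_point (fun r => ~ P r).
  by apply: amalgam_point_preserves => u k r /hZ [hval _] nP /(hval r nP).
exact ((sat_transfer hwf _ _ _ _ _ (amalgam_point_morphism hW) hr hp).1 hpol y hsat).
Qed.

End Transfer.

(* The conditions on A1 and A2 only make the formula well formed; the argument
   does not need them. *)
Theorem mainTheorem16 (Act : finType) (A1 A2 : {set Act})
  (hA1 : A1 != set0) (hA2 : A2 != set0) (hdis : [disjoint A1 & A2])
  (q : nat) (eta : bool) (phi : form Act)
  (hwf : wf (FFix eta q phi))
  (M N : model Act) (s : St M) (t : St N)
  (href : refines (fun r => r = q) A1 A2 M s N t)
  (hsat : sat (FFix eta q phi) N t) :
  sat (FEx A1 A2 (FFix eta q phi)) M s.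
Proof. exact: refinement_transfer hwf href (polarity_within_fix eta q phi) hsat. Qed.
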